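(* Let $s,t,z$ be positive integers, $p=\min\{\lfloor\frac{z-1}{ts-t}\rfloor,t-1\}$ (with $p=t-1$ when $s=1$), and let $N_{\text{PolyDot-CMPC}}$ and $N_{\text{SSMM}}$ be as in the context. Then $N_{\text{PolyDot-CMPC}}<N_{\text{SSMM}}$ in the two regions 1. $z>\max\{ts,\,ts-t+\frac{pts}{t-1}\}$, $t\ne1$; 2. $\frac{t-1}{t-2}(st-t)<z\le ts$; and for all other values of $s,t,z$, $N_{\text{PolyDot-CMPC}}\ge N_{\text{SSMM}}$.
   Context: $N_{\text{PolyDot-CMPC}}$ is the number of workers needed by the PolyDot-CMPC scheme, given by: with $\theta'=2ts-t$ and $\upsilon'=\max\{ts-2t-s+2,\frac{ts-2t+1}{2}\}$, $N_{\text{PolyDot-CMPC}}=(p+2)ts+\theta'(t-1)+2z-1$ if $ts<z$ or $t=1$; $=2ts+\theta'(t-1)+3z-1$ if $ts-t<z\le ts$, $s,t\ne1$; $=2ts+\theta'(t-1)+2z-1$ if $ts-2t<z\le ts-t$, $s,t\ne1$; $=(t+1)ts+(t-1)(z+t-1)+2z-1$ if $\upsilon'<z\le ts-2t$, $s,t\ne1$; $=\theta't+z$ if $z\le\upsilon'$, $s,t\ne1$; $=t^2+2t+tz-1$ if $s=1$, $t\ge z$, $t\ne1$. $N_{\text{SSMM}}=(t+1)(ts+z)-1$ is the number of workers of the SSMM baseline. Here $s,t$ are the numbers of row/column partitions and $z$ the number of colluding workers. *)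

From mathcomp Require Import all_boot all_order all_algebra.
Set Implicit Arguments. Unset Strict Implicit. Unset Printing Implicit Defensive.
Import Order.TTheory GRing.Theory Num.Theory.

(* All counts are natural numbers; comparisons with the (possibly
   fractional / possibly negative) thresholds are done in [rat]. *)

Definition qn (n : nat) : rat := (n%:R)%R.

Definition pCMPC (s t z : nat) : nat :=
  if s == 1 then t - 1 else minn ((z - 1) %/ (t * s - t)) (t - 1).

Definition theta' (s t : nat) : nat := 2 * t * s - t.

Definition upsilon' (s t : nat) : rat :=
  (Num.max (qn (t * s) - 2 * qn t - qn s + 2) ((qn (t * s) - 2 * qn t + 1) / 2))%R.

(* N_{PolyDot-CMPC}, case by case as in the paper (the cases are exhaustive
   for positive s, t, z; the final [0] branch is unreachable). *)
Definition N_PolyDot (s t z : nat) : nat :=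
  let ts := t * s in
  if (ts < z) || (t == 1) then
    (pCMPC s t z + 2) * ts + theta' s t * (t - 1) + 2 * z - 1
  else if (s != 1) && (t != 1) && (ts - t < z <= ts) then
    2 * ts + theta' s t * (t - 1) + 3 * z - 1
  else if (s != 1) && (t != 1) && ((qn ts - 2 * qn t < qn z)%R && (z <= ts - t)) then
    2 * ts + theta' s t * (t - 1) + 2 * z - 1
  else if (s != 1) && (t != 1) && ((upsilon' s t < qn z)%R && (qn z <= qn ts - 2 * qn t)%R) then
    (t + 1) * ts + (t - 1) * (z + t - 1) + 2 * z - 1
  else if (s != 1) && (t != 1) && (qn z <= upsilon' s t)%R then
    theta' s t * t + z
  else if (s == 1) && (z <= t) && (t != 1) then
    t ^ 2 + 2 * t + t * z - 1
  else 0.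

Definition N_SSMM (s t z : nat) : nat := (t + 1) * (t * s + z) - 1.

Definition region1 (s t z : nat) : Prop :=
  t <> 1 /\
  (Num.max (qn (t * s)) (qn (t * s) - qn t + qn (pCMPC s t z * (t * s)) / qn (t - 1))
     < qn z)%R.

(* Region 2: (t-1)/(t-2) (st - t) < z <= ts; read with
   t > 2 (so that the coefficient (t-1)/(t-2) is defined) and s <> 1
   (the region belongs to the s,t <> 1 cases of N_PolyDot). *)
Definition region2 (s t z : nat) : Prop :=
  2 < t /\ s <> 1 /\
  (qn (t - 1) / qn (t - 2) * qn (s * t - t) < qn z)%R /\ z <= t * s.

(* In each regime of z the paper's case formula for N_PolyDot is explicit and
   N_SSMM - N_PolyDot is a simple polynomial.  For z > ts it equals
   (t - 1)(z + t) - ts(t - 1) - p ts, which is positive exactly in region 1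
   once the denominator t - 1 is cleared.  For ts - t < z <= ts it equals
   (t - 2) z - (t - 1)(st - t), positive exactly in region 2.  In all other
   regimes (t = 1, s = 1, or z <= ts - t) it is never positive. *)

From mathcomp Require Import all_boot all_order all_algebra.
From mathcomp Require Import zify lra.
Import Order.TTheory GRing.Theory Num.Theory.

Lemma ltn_iff_cases (A : Prop) (m n : nat) :
  (A <-> m < n) -> (A -> m < n) /\ (~ A -> n <= m).
Proof. by move=> [Amn nmA]; split=> [//|nA]; rewrite leqNgt; apply/negP=> /nmA. Qed.

Section RationalThresholds.
Local Open Scope ring_scope.

Lemma ts_sub_2t_lt_qn s t z : (qn (t * s) - 2 * qn t < qn z) = (t * s < z + 2 * t)%N.
Proof. by rewrite /qn ltrBlDr -natrM -natrD ltr_nat. Qed.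

Lemma qn_le_ts_sub_2t s t z : (qn z <= qn (t * s) - 2 * qn t) = (z + 2 * t <= t * s)%N.
Proof. by rewrite /qn lerBrDr -natrM -natrD ler_nat. Qed.

Lemma upsilon'_lt_qn s t z :
  (upsilon' s t < qn z) = (t * s + 2 < z + 2 * t + s)%N && (t * s + 1 < 2 * z + 2 * t)%N.
Proof.
rewrite /upsilon' gt_max /qn -!(ltr_nat rat) !natrD !natrM.
by congr andb; apply/idP/idP => ?; lra.
Qed.

Lemma region1E s t z : (1 < t)%N ->
  region1 s t z <->
  (t * s < z)%N /\ (pCMPC s t z * (t * s) + t * s * (t - 1) < (z + t) * (t - 1))%N.
Proof.
rewrite /region1 gt_max; set p := pCMPC s t z => t_gt1.
have t1_gt0 : 0 < qn (t - 1) by rewrite ltr0n subn_gt0.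
have -> : (qn (t * s) - qn t + qn (p * (t * s)) / qn (t - 1) < qn z) =
          (p * (t * s) + t * s * (t - 1) < (z + t) * (t - 1))%N.
  rewrite addrC -ltrBrDr ltr_pdivrMr // /qn -(ltr_nat rat).
  rewrite !(natrD, natrM) natrB ?(ltnW t_gt1) //.
  by apply/idP/idP => ?; lra.
rewrite /qn ltr_nat.
by split=> [[_ /andP[]] | [-> ->]] //; split=> //; lia.
Qed.

Lemma region2E s t z : s != 1%N ->
  region2 s t z <-> ((t - 1) * (s * t - t) < z * (t - 2) /\ z <= t * s)%N.
Proof.
move=> s_neq1; rewrite /region2.
have [t_le2 | t_gt2] := leqP t 2.
  have -> : (t - 2 = 0)%N by lia.
  by rewrite muln0 ltn0; split=> [[] | []]; lia.
have t2_gt0 : 0 < qn (t - 2) by rewrite ltr0n subn_gt0.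
rewrite mulrAC ltr_pdivrMr // /qn -!natrM ltr_nat.
by split=> [[_ [_]] // | [lt_z le_z]]; do !split=> //; apply/eqP.
Qed.

End RationalThresholds.

Lemma theta'S s t : theta' s.+1 t = t * (2 * s).+1.
Proof. by rewrite /theta'; lia. Qed.

Lemma N_PolyDot_t1 s z : N_PolyDot s 1 z = N_SSMM s 1 z.
Proof. by rewrite /N_PolyDot /N_SSMM /pCMPC /theta' eqxx orbT subnn minn0 muln0 if_same; lia. Qed.

(* Below, writing s = b.+1 or b.+2 and t = a.+2 removes the truncated
   subtractions, which nia otherwise handles by slow case splits. *)
Lemma ltn_PolyDot_SSMM_gt_ts s t z : 0 < s -> 1 < t -> t * s < z ->
  (N_PolyDot s t z < N_SSMM s t z) =
  (pCMPC s t z * (t * s) + t * s * (t - 1) < (z + t) * (t - 1)).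
Proof.
move=> s_gt0 t_gt1 lt_ts_z; rewrite /N_PolyDot lt_ts_z /= /N_SSMM.
move: (pCMPC s t z) lt_ts_z => p.
case: s s_gt0 => // b _; case: t t_gt1 => [|[|a]] // _.
rewrite theta'S -[a.+2 - 1]/a.+1 => lt_ts_z.
rewrite ltn_sub2rE; last by lia.
by apply/idP/idP; nia.
Qed.

Lemma leq_SSMM_PolyDot_s1 t z : 1 < t -> z <= t -> N_SSMM 1 t z <= N_PolyDot 1 t z.
Proof.
rewrite /N_PolyDot /N_SSMM !muln1 => t_gt1 le_z_t.
by rewrite (leq_gtF le_z_t) le_z_t eqxx (gtn_eqF t_gt1) /=; nia.
Qed.

Lemma ltn_PolyDot_SSMM_mid_z s t z : 1 < s -> 1 < t -> t * s - t < z <= t * s ->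
  (N_PolyDot s t z < N_SSMM s t z) = ((t - 1) * (s * t - t) < z * (t - 2)).
Proof.
move=> s_gt1 t_gt1 /andP[lt_z le_z].
rewrite /N_PolyDot (leq_gtF le_z) lt_z le_z (gtn_eqF s_gt1) (gtn_eqF t_gt1) /= /N_SSMM.
have -> : s * t - t = (s - 1) * t by rewrite mulnBl mul1n.
move: lt_z; have -> : t * s - t = t * (s - 1) by rewrite mulnBr muln1.
rewrite subn2; case: s s_gt1 le_z => [|[|b]] // _; case: t t_gt1 => [|[|a]] // _.
rewrite theta'S -[a.+2 - 1]/a.+1 -[b.+2 - 1]/b.+1 -[a.+2.-2]/a => le_z lt_z.
by apply/idP/idP; nia.
Qed.

Lemma leq_SSMM_PolyDot_small_z s t z : 1 < s -> 1 < t -> z <= t * s - t ->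
  N_SSMM s t z <= N_PolyDot s t z.
Proof.
move=> s_gt1 t_gt1 le_z.
have lt_ts_z : t * s < z = false by rewrite leq_gtF // (leq_trans le_z) ?leq_subr.
rewrite /N_PolyDot {}lt_ts_z (leq_gtF le_z) (gtn_eqF s_gt1) (gtn_eqF t_gt1) /= /N_SSMM.
rewrite ts_sub_2t_lt_qn qn_le_ts_sub_2t upsilon'_lt_qn leNgt upsilon'_lt_qn.
have -> : z + t - 1 = z + (t - 1) by rewrite addnBA // ltnW.
move: le_z; have -> : t * s - t = t * (s - 1) by rewrite mulnBr muln1.
case: s s_gt1 => [|[|b]] // _; case: t t_gt1 => [|[|a]] // _.
rewrite theta'S -[a.+2 - 1]/a.+1 -[b.+2 - 1]/b.+1 => le_z.
case: ifP => [_ | not_mid]; first nia.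
case: ifP => [_ | not_low]; first nia.
case: ifP => [| not_le_ups]; first by rewrite negb_and -!leqNgt => /orP[]; nia.
lia.
Qed.

Lemma ltn_PolyDot_SSMM_le_ts s t z : 1 < s -> 1 < t -> z <= t * s ->
  (N_PolyDot s t z < N_SSMM s t z) = ((t - 1) * (s * t - t) < z * (t - 2)).
Proof.
move=> s_gt1 t_gt1 le_z_ts.
have [le_z | lt_z] := leqP z (t * s - t); last by rewrite ltn_PolyDot_SSMM_mid_z ?lt_z.
rewrite ltnNge leq_SSMM_PolyDot_small_z //.
by rewrite mulnC [s * t]mulnC ltnNge leq_mul // leq_sub2l.
Qed.

Theorem lemma2 (s t z : nat) (hs : 0 < s) (ht : 0 < t) (hz : 0 < z) :
  ((region1 s t z \/ region2 s t z) -> N_PolyDot s t z < N_SSMM s t z) /\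
  (~ (region1 s t z \/ region2 s t z) -> N_SSMM s t z <= N_PolyDot s t z).
Proof.
apply: ltn_iff_cases.
have [-> | t_neq1] := eqVneq t 1.
  by rewrite N_PolyDot_t1 ltnn; split=> // -[[] | []].
have t_gt1 : 1 < t by rewrite ltn_neqAle eq_sym t_neq1.
have region1P := region1E s t z t_gt1.
have [lt_ts_z | le_z_ts] := ltnP (t * s) z.
  have not_region2 : ~ region2 s t z by case=> _ [_ [_]]; rewrite leqNgt lt_ts_z.
  rewrite ltn_PolyDot_SSMM_gt_ts //.
  by split=> [[/region1P[] | /not_region2] | lt_N] //; left; exact/region1P.
have not_region1 : ~ region1 s t z by case/region1P; rewrite ltnNge le_z_ts.
have [s1 | s_neq1] := eqVneq s 1.
  subst s; rewrite muln1 in le_z_ts.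
  by rewrite ltnNge leq_SSMM_PolyDot_s1 //; split=> // -[/not_region1 | [_ []]].
have s_gt1 : 1 < s by rewrite ltn_neqAle eq_sym s_neq1.
have region2P := region2E s t z s_neq1.
rewrite ltn_PolyDot_SSMM_le_ts //.
by split=> [[/not_region1 | /region2P[]] | lt_N] //; right; exact/region2P.
Qed.
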